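(* Let $m$ and $n$ be powers of $2$ with $m \ge 16$, $n \ge 4$ and $m \le 4n$, and let $$G = G(m,n) := \langle a, b \mid a^m = 1,\ b^n = 1,\ [b,a] = a^4 \rangle.$$ Then $G$ does not satisfy property $( * )$. Consequently, there are infinitely many finite $2$-groups that do not satisfy $( * )$.
   Context: Commutators are $[x,y] = x^{-1}y^{-1}xy$. An involution is an element of order exactly $2$. A finite group $G$ satisfies property $( * )$ if there exist a group $\Gamma$ generated by involutions and a subgroup of index $2$ in $\Gamma$ that is isomorphic to $G$. *)

From mathcomp Require Import all_boot all_fingroup.
Set Implicit Arguments. Unset Strict Implicit. Unset Printing Implicit Defensive.
Local Open Scope group_scope.

Definition involution (gT : finGroupType) (x : gT) : bool := #[x] == 2%N.

(* Since G is finite, such a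
   Gam has order 2|G| and is finite, so Gam ranges over finite groups. *)
Definition property_star (gT : finGroupType) (G : {set gT}) : Prop :=
  exists (rT : finGroupType) (Gam H : {group rT}) (S : {set rT}),
    [/\ {in S, forall x, involution x}, Gam :=: <<S>>,
        H \subset Gam, #|Gam : H| = 2%N & H \isog G].

(* Let H = <a, b> be the group of the presentation, of order m n, and suppose H has
   index 2 in Gam = <<S>> with S a set of involutions.  Reading normal forms b^j a^i
   modulo 4 gives a homomorphism H -> Z_4^2 (as m - 3 = 1 mod 4), and an involution
   t in S outside H acts on Z_4^2 by a linear map T.  Each generator lies in H or in
   H t, so all of H maps into K = ker (1 + T) + 2 Z_4^2; hence K = Z_4^2, which forces
   T = -1.  So a^t = b^j a^i with j = 0, i = 3 (mod 4) and b^t = b^j' a^i' with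
   j' = 3 (mod 4); conjugating a b = b a^(m-3) by t and comparing a-exponents modulo 16
   yields 8 i = 0 (mod 16), contradicting i odd.  The order m n is certified by a
   permutation model on Z_m x Z_n, which exists because m <= 4 n makes (-3)^n = 1
   modulo m. *)

From mathcomp Require Import all_boot all_algebra all_fingroup all_solvable.
From mathcomp Require Import ring zify.
Import GRing.Theory.
Set Implicit Arguments. Unset Strict Implicit. Unset Printing Implicit Defensive.
Local Open Scope group_scope.

Section LinearMapMod4.
Local Open Scope ring_scope.
Variables p q r s : 'Z_4.

(* The endomorphism T of Z_4^2 with matrix [[p, q], [r, s]] on row vectors. *)
Definition Tfst (x y : 'Z_4) := x * p + y * r.
Definition Tsnd (x y : 'Z_4) := x * q + y * s.

Definition Tanti (x y : 'Z_4) : Prop := x + Tfst x y = 0 /\ y + Tsnd x y = 0.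

(* [inK x y] says that (x, y) lies in K := ker (1 + T) + 2 Z_4^2. *)
Definition inK (x y : 'Z_4) : Prop := exists u v, Tanti (x - 2 * u) (y - 2 * v).

Lemma Tanti_add x y x' y' : Tanti x y -> Tanti x' y' -> Tanti (x + x') (y + y').
Proof.
rewrite /Tanti /Tfst /Tsnd => -[e1 e2] [e1' e2']; split.
  by rewrite -[0](addr0 0) -{1}e1 -e1'; ring.
by rewrite -[0](addr0 0) -{1}e2 -e2'; ring.
Qed.

Lemma Tanti_scale k x y : Tanti x y -> Tanti (k * x) (k * y).
Proof.
rewrite /Tanti /Tfst /Tsnd => -[e1 e2]; split.
  by rewrite -(mulr0 k) -{1}e1; ring.
by rewrite -(mulr0 k) -{1}e2; ring.
Qed.

Lemma inK_add x y x' y' : inK x y -> inK x' y' -> inK (x + x') (y + y').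
Proof.
move=> [u [v h]] [u' [v' h']]; exists (u + u'), (v + v').
by have := Tanti_add h h'; congr Tanti; ring.
Qed.

Lemma inK_Tanti x y : Tanti x y -> inK x y.
Proof. by exists 0, 0; rewrite !mulr0 !subr0. Qed.

Lemma inK_double u v : inK (2 * u) (2 * v).
Proof. by exists u, v; rewrite !subrr; split; rewrite /Tfst /Tsnd; ring. Qed.

Lemma inK_T x y : inK x y -> inK (Tfst x y) (Tsnd x y).
Proof.
move=> [u [v h]]; exists (Tfst u v), (Tsnd u v).
have := Tanti_scale (-1) h; case: h => e1 e2; congr Tanti.
  transitivity (- (x - 2 * u) + ((x - 2 * u) + Tfst (x - 2 * u) (y - 2 * v))).
    by rewrite e1; ring.
  by rewrite /Tfst; ring.
transitivity (- (y - 2 * v) + ((y - 2 * v) + Tsnd (x - 2 * u) (y - 2 * v))).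
  by rewrite e2; ring.
by rewrite /Tsnd; ring.
Qed.

(* Nakayama: K = Z_4^2 forces ker (1 + T) = Z_4^2, i.e. T = -1. *)
Lemma inK_basis : inK 1 0 -> inK 0 1 -> [/\ p = -1, q = 0, r = 0 & s = -1].
Proof.
have four0 : 2 * 2 = 0 :> 'Z_4 by apply/eqP.
move=> [u [v h10]] [u' [v' h01]].
have h20 : Tanti 2 0.
  by have := Tanti_scale 2 h10; congr Tanti; rewrite mulrBr mulrA four0; ring.
have h02 : Tanti 0 2.
  by have := Tanti_scale 2 h01; congr Tanti; rewrite mulrBr mulrA four0; ring.
have [e1 e2] : Tanti 1 0.
  have := Tanti_add h10 (Tanti_add (Tanti_scale u h20) (Tanti_scale v h02)).
  by congr Tanti; ring.
have [e3 e4] : Tanti 0 1.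
  have := Tanti_add h01 (Tanti_add (Tanti_scale u' h20) (Tanti_scale v' h02)).
  by congr Tanti; ring.
move: e1 e2 e3 e4; rewrite /Tfst /Tsnd !mul1r !mul0r !addr0 !add0r => e1 e2 e3 e4.
by split=> //; apply/eqP; rewrite -addr_eq0 addrC ?e1 ?e4.
Qed.

End LinearMapMod4.

Lemma Z4_double_eq0 (x : 'Z_4) : (x + x = 0)%R -> exists u, x = (2 * u)%R.
Proof.
case: x => [[|[|[|[|//]]]] ?] // _; [exists 0%R | exists 1%R]; exact: val_inj.
Qed.

Lemma involution_mulxx (gT : finGroupType) (x : gT) : involution x -> x * x = 1.
Proof. by move/eqP=> ox; rewrite -[x * x]/(x ^+ 2) -ox expg_order. Qed.

Lemma gen_mulr_ind (gT : finGroupType) (S : {set gT}) (P : gT -> Prop) :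
  P 1 -> (forall x s, P x -> s \in S -> P (x * s)) -> {in <<S>>, forall x, P x}.
Proof.
move=> P1 PM x /gen_prodgP[k [g Sg ->]]; elim: k g Sg => [|k IHk] g Sg.
  by rewrite big_ord0.
by rewrite big_ord_recr /=; apply: PM (IHk _ (fun i => Sg _)) (Sg _).
Qed.

Section IndexTwoInvolutionGenerated.
Variables (gT : finGroupType) (Gam H : {group gT}) (S : {set gT}).
Hypotheses (invS : {in S, forall x, involution x}) (defGam : Gam :=: <<S>>).
Hypotheses (sHGam : H \subset Gam) (iHGam : #|Gam : H| = 2).

Lemma gen_notin_index2 : exists2 t, t \in S & t \notin H.
Proof.
apply/subsetPn/negP; rewrite -gen_subG -defGam => sGamH.
have eqHGam : H :=: Gam by apply/eqP; rewrite eqEsubset sHGam.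
by move: iHGam; rewrite eqHGam indexgg.
Qed.

Variables (t : gT) (P : gT -> Prop).
Hypotheses (St : t \in S) (tH : t \notin H).
Hypotheses (P1 : P 1) (PM : forall x y, P x -> P y -> P (x * y)).
Hypotheses (PJ : forall x, P x -> P (x ^ t)).
Hypotheses (P_invol : {in H, forall x, x * x = 1 -> P x}).
Hypotheses (P_anti : {in H, forall x, x * x ^ t = 1 -> P x}).

Lemma index2_involution_ind : {in H, forall x, P x}.
Proof.
have Gam_t : t \in Gam by rewrite defGam mem_gen.
have tt : t * t = 1 := involution_mulxx (invS St).
have conj_t h : h ^ t = t * h * t.
  have tV : t^-1 = t by apply/eqP; rewrite eq_invg_mul tt.
  by rewrite /conjg tV mulgA.
have H_t h : h \in H -> h ^ t \in H.
  by move=> Hh; rewrite memJ_norm // (subsetP (normal_norm (index2_normal sHGam iHGam))).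
pose Q x := (x \in H /\ P x) \/ (exists2 h, x = h * t & h \in H /\ P h).
have QGam : {in Gam, forall x, Q x}.
  rewrite defGam; apply: gen_mulr_ind => [|x s Qx Ss]; first by left.
  have ss := involution_mulxx (invS Ss).
  have [Hs | notHs] := boolP (s \in H).
    have Ps := P_invol Hs ss.
    case: Qx => [[Hx Px] | [h -> [Hh Ph]]]; first by left; split; [rewrite groupM | apply: PM].
    right; exists (h * s ^ t); last by split; [rewrite groupM ?H_t | apply/PM/PJ].
    by rewrite conj_t !mulgA -(mulgA _ t t) tt mulg1.
  have : s \in H :* t.
    by rewrite (rcoset_index2 sHGam iHGam) // ?inE ?notHs ?tH // defGam mem_gen.
  case/rcosetP=> h0 Hh0 es; have Ph0 : P h0.
    by apply: P_anti => //; rewrite conj_t -ss es !mulgA.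
  case: Qx => [[Hx Px] | [h -> [Hh Ph]]].
    by right; exists (x * h0); [rewrite es mulgA | split; [rewrite groupM | apply: PM]].
  left; rewrite (_ : _ * _ = h * h0 ^ t); last first.
    by rewrite conj_t es !mulgA.
  by split; [rewrite groupM ?H_t | apply/PM/PJ].
move=> x Hx; case: (QGam x (subsetP sHGam x Hx)) => [[] // | [h ex [Hh _]]].
by case/negP: tH; rewrite -(mulKg h t) -ex groupM ?groupV.
Qed.

End IndexTwoInvolutionGenerated.

Lemma Zp_nat_congr d N x y :
  1 < d -> d %| N -> x = y %[mod N] -> (x%:R = y%:R :> 'Z_d)%R.
Proof.
move=> d_gt1 dvd_dN exy.
by rewrite -(Zp_nat_mod d_gt1 x) -(modn_dvdm x dvd_dN) exy modn_dvdm // Zp_nat_mod.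
Qed.

Lemma natr_Zp_mod d x (y : 'Z_d) : 1 < d -> (x%:R = y)%R -> x %% d = y.
Proof. by move=> d_gt1 <-; rewrite val_Zp_nat. Qed.

Lemma natr_subn3 d N : 1 < d -> d %| N -> 2 < N -> ((N - 3)%:R : 'Z_d)%R = (-3)%R.
Proof.
move=> d_gt1 dvd_dN N_gt2; rewrite natrB // -(Zp_nat_mod d_gt1 N) (eqP dvd_dN).
by rewrite sub0r.
Qed.

Section NormalForm.
Variables (gT : finGroupType) (a b : gT) (m n : nat).
Hypotheses (m_gt2 : 2 < m) (n_gt0 : 0 < n).
Hypotheses (am : a ^+ m = 1) (bn : b ^+ n = 1) (ba : [~ b, a] = a ^+ 4).

Local Notation c := (m - 3).
Local Notation H := (<[a]> <*> <[b]>).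

Lemma conj_ab : a ^ b = a ^+ c.
Proof.
have a_b3 : (a ^ b)^-1 = a ^+ 3.
  by apply: (mulIg a); rewrite -expgSr -ba commgEr conjVg.
by apply/eqP; rewrite -[a ^ b]invgK a_b3 eq_invg_mul -expgnDr subnKC ?am.
Qed.

Lemma conjXX_ab i j : (a ^+ i) ^ (b ^+ j) = a ^+ (i * c ^ j).
Proof.
elim: j => [|j IHj]; first by rewrite conjg1 expn0 muln1.
by rewrite expgSr conjgM IHj conjXg conj_ab -expgnA expnS mulnCA.
Qed.

Lemma nf_mul j i l k :
  (b ^+ j * a ^+ i) * (b ^+ l * a ^+ k) = b ^+ (j + l) * a ^+ (i * c ^ l + k).
Proof.
rewrite mulgA -(mulgA (b ^+ j)) [a ^+ i * _]conjgC conjXX_ab.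
by rewrite mulgA -expgnDr -mulgA -expgnDr.
Qed.

Lemma nf_expg j i k :
  (b ^+ j * a ^+ i) ^+ k = b ^+ (j * k) * a ^+ (i * \sum_(t < k) c ^ (j * t)).
Proof.
elim: k => [|k IHk]; first by rewrite big_ord0 !muln0 mulg1.
by rewrite expgS IHk nf_mul big_ord_recr /= mulnS mulnDr [i * _ + _]addnC.
Qed.

Lemma join_cycles_ba : <[a]> <*> <[b]> = <[b]> * <[a]>.
Proof.
have nab : <[b]> \subset 'N(<[a]>) by rewrite norms_cycle conj_ab mem_cycle.
by rewrite norm_joinEr // (normC nab).
Qed.

Lemma mem_nf h : h \in H -> exists j i, h = b ^+ j * a ^+ i.
Proof.
rewrite join_cycles_ba => /mulsgP[_ _ /cycleP[j ->] /cycleP[i ->] ->].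
by exists j, i.
Qed.

Lemma card_join_cycles_dvdn : #|H| %| m * n.
Proof.
rewrite join_cycles_ba mulnC.
apply: dvdn_trans (dvdn_mulr #|<[b]> :&: <[a]>| (dvdnn _)) _.
by rewrite -mul_cardG dvdn_mul // -/(order _) order_dvdn ?bn ?am.
Qed.

Hypothesis card_ge : m * n <= #|H|.

Lemma nf_uniq j i l k :
  b ^+ j * a ^+ i = b ^+ l * a ^+ k -> j = l %[mod n] /\ i = k %[mod m].
Proof.
have m_gt0 : 0 < m by apply: leq_trans m_gt2.
pose f (e : 'I_n * 'I_m) := b ^+ e.1 * a ^+ e.2.
have f_nf j' i' :
    b ^+ j' * a ^+ i' = f (Ordinal (ltn_pmod j' n_gt0), Ordinal (ltn_pmod i' m_gt0)).
  by rewrite /f /= !expg_mod.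
have f_inj : injective f.
  apply: in2T; apply/image_injP; rewrite eqn_leq leq_image_card /=.
  rewrite card_prod !card_ord mulnC; apply: leq_trans card_ge _.
  apply/subset_leq_card/subsetP => h /mem_nf[j' [i' ->]].
  by rewrite f_nf image_f.
by rewrite !f_nf => /f_inj [-> ->].
Qed.

Hypotheses (m16 : 16 %| m) (n4 : 4 %| n).
Let m4 : 4 %| m := dvdn_trans (isT : 4 %| 16) m16.

(* Since m - 3 = 1 (mod 4), [coord4] is the graph of a homomorphism H -> Z_4^2. *)
Definition coord4 h (x y : 'Z_4) : Prop :=
  exists j i, [/\ h = b ^+ j * a ^+ i, (j%:R = x)%R & (i%:R = y)%R].

Lemma coord4_nf j i : coord4 (b ^+ j * a ^+ i) j%:R%R i%:R%R.
Proof. by exists j, i. Qed.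

Lemma coord4_exists h : h \in H -> exists x y, coord4 h x y.
Proof. by case/mem_nf=> j [i ->]; exists j%:R%R, i%:R%R; apply: coord4_nf. Qed.

Lemma coord4_uniq h x y x' y' : coord4 h x y -> coord4 h x' y' -> x = x' /\ y = y'.
Proof.
move=> [j [i [-> <- <-]]] [j' [i' [/nf_uniq[ejj' eii'] <- <-]]].
by split; [apply: (Zp_nat_congr _ n4) | apply: (Zp_nat_congr _ m4)].
Qed.

Lemma coord4_mul h k x y x' y' :
  coord4 h x y -> coord4 k x' y' -> coord4 (h * k) (x + x')%R (y + y')%R.
Proof.
have c4 : (c%:R : 'Z_4)%R = 1%R.
  by rewrite (natr_subn3 _ m4 m_gt2); apply/eqP.
move=> [j [i [-> <- <-]]] [l [k' [-> <- <-]]].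
exists (j + l), (i * c ^ l + k'); rewrite nf_mul.
by rewrite !natrD natrM natrX c4 expr1n mulr1.
Qed.

Lemma coord4_1 : coord4 1 0%R 0%R.
Proof. by exists 0, 0; rewrite mulg1. Qed.

Lemma coord4_expg h x y k : coord4 h x y -> coord4 (h ^+ k) (x *+ k)%R (y *+ k)%R.
Proof.
move=> hxy; elim: k => [|k IHk]; first exact: coord4_1.
by rewrite expgS !mulrS; apply: coord4_mul.
Qed.

(* (-3)^4 = 1 in Z_16, so the hypotheses leave 8 Ia = 0 (mod 16) from the a-exponents. *)
Lemma nf_conj_rel_mod16 Ja Ia Jb Ib : Ja %% 4 = 0 -> Jb %% 4 = 3 -> Ia %% 4 = 3 ->
  (b ^+ Ja * a ^+ Ia) * (b ^+ Jb * a ^+ Ib) <>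
  (b ^+ Jb * a ^+ Ib) * (b ^+ Ja * a ^+ Ia) ^+ c.
Proof.
move=> Ja0 Jb3 Ia3; rewrite nf_expg !nf_mul => /nf_uniq[_].
move=> /(Zp_nat_congr (isT : 1 < 16) m16).
have c16 : (c%:R = -3 :> 'Z_16)%R := natr_subn3 (isT : 1 < 16) m16 m_gt2.
have m3_exp k : ((-3 : 'Z_16) ^+ k = (-3) ^+ (k %% 4))%R.
  rewrite {1}(divn_eq k 4) exprD mulnC exprM (_ : (-3) ^+ 4 = 1)%R ?expr1n ?mul1r //.
  by apply/eqP.
have exp_Ja k : ((-3 : 'Z_16) ^+ (Ja * k) = 1)%R by rewrite m3_exp -modnMml Ja0.
rewrite !natrD !natrM !natrX natr_sum c16 m3_exp Jb3 exp_Ja mulr1.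
rewrite (eq_bigr (fun _ => 1%R)) => [|i _]; last by rewrite natrX c16 exp_Ja.
rewrite sumr_const card_ord -[(1 *+ c)%R]/(c%:R)%R c16 => e.
have E8 : ((Ia * 8)%:R = 0 :> 'Z_16)%R.
  transitivity (Ia%:R * (-3) ^+ 3 + Ib%:R - (Ib%:R + Ia%:R * (-3))
                + Ia%:R * 16%:R * 2 : 'Z_16)%R.
    by rewrite natrM; ring.
  by rewrite e subrr (pchar_Zp (isT : 1 < 16)) mulr0 mul0r add0r.
have /= := natr_Zp_mod (isT : 1 < 16) E8; lia.
Qed.

Section ConjugationByInvolution.
Variables (Gam : {group gT}) (S : {set gT}) (t : gT) (Ja Ia Jb Ib : nat).
Hypotheses (invS : {in S, forall x, involution x}) (defGam : Gam :=: <<S>>).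
Hypotheses (sHGam : H \subset Gam) (iHGam : #|Gam : H| = 2).
Hypotheses (St : t \in S) (tH : t \notin H).
Hypotheses (a_t : a ^ t = b ^+ Ja * a ^+ Ia) (b_t : b ^ t = b ^+ Jb * a ^+ Ib).

Let p : 'Z_4 := Jb%:R%R.
Let q : 'Z_4 := Ib%:R%R.
Let r : 'Z_4 := Ja%:R%R.
Let s : 'Z_4 := Ia%:R%R.

Lemma coord4_conj h x y : coord4 h x y -> coord4 (h ^ t) (Tfst p r x y) (Tsnd q s x y).
Proof.
move=> [j [i [-> <- <-]]]; rewrite conjMg !conjXg a_t b_t.
have := coord4_mul (coord4_expg j (coord4_nf Jb Ib)) (coord4_expg i (coord4_nf Ja Ia)).
suff [-> ->] : (Tfst p r j%:R i%:R = Jb%:R *+ j + Ja%:R *+ i)%R /\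
                (Tsnd q s j%:R i%:R = Ib%:R *+ j + Ia%:R *+ i)%R by [].
by rewrite /Tfst /Tsnd !mulr_natl.
Qed.

Lemma conj_generators_mod4 : [/\ Jb %% 4 = 3, Ja %% 4 = 0 & Ia %% 4 = 3].
Proof.
pose P h := exists x y, coord4 h x y /\ inK p q r s x y.
have P1 : P 1.
  by exists 0%R, 0%R; split; [exact: coord4_1 | have := inK_double p q r s 0 0; rewrite mulr0].
have PM h k : P h -> P k -> P (h * k).
  move=> [x [y [hxy Kxy]]] [x' [y' [kxy Kxy']]].
  by exists (x + x')%R, (y + y')%R; split; [apply: coord4_mul | apply: inK_add].
have PJ h : P h -> P (h ^ t).
  move=> [x [y [hxy Kxy]]].
  by exists (Tfst p r x y), (Tsnd q s x y); split; [apply: coord4_conj | apply: inK_T].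
have P_invol : {in H, forall h, h * h = 1 -> P h}.
  move=> h /coord4_exists[x [y hxy]] hh; exists x, y; split=> //.
  have hh0 : coord4 (h * h) 0%R 0%R by rewrite hh; apply: coord4_1.
  have [/Z4_double_eq0[u ->] /Z4_double_eq0[v ->]] := coord4_uniq (coord4_mul hxy hxy) hh0.
  exact: inK_double.
have P_anti : {in H, forall h, h * h ^ t = 1 -> P h}.
  move=> h /coord4_exists[x [y hxy]] hht; exists x, y; split=> //.
  have hht0 : coord4 (h * h ^ t) 0%R 0%R by rewrite hht; apply: coord4_1.
  have [e1 e2] := coord4_uniq (coord4_mul hxy (coord4_conj hxy)) hht0.
  exact: inK_Tanti.
have PH := index2_involution_ind invS defGam sHGam iHGam St tH P1 PM PJ P_invol P_anti.
have inK_at h x y : h \in H -> coord4 h x y -> inK p q r s x y.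
  by move=> /PH[x' [y' [hxy' Kxy']]] /(coord4_uniq hxy')[<- <-].
have K01 : inK p q r s 0%R 1%R.
  apply: (inK_at a); first by rewrite mem_gen // inE cycle_id.
  by have := coord4_nf 0 1; rewrite mul1g expg1.
have K10 : inK p q r s 1%R 0%R.
  apply: (inK_at b); first by rewrite mem_gen // inE cycle_id orbT.
  by have := coord4_nf 1 0; rewrite mulg1 expg1.
have Zp4_mod := natr_Zp_mod (isT : 1 < 4).
by have [/Zp4_mod-> _ /Zp4_mod-> /Zp4_mod->] := inK_basis K10 K01.
Qed.
End ConjugationByInvolution.

Lemma no_involution_generated_overgroup (Gam : {group gT}) (S : {set gT}) :
  {in S, forall x, involution x} -> Gam :=: <<S>> -> H \subset Gam ->
  #|Gam : H| <> 2.
Proof.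
move=> invS defGam sHGam iHGam.
have [t St tH] := gen_notin_index2 defGam sHGam iHGam.
have nHt : t \in 'N(H).
  by rewrite (subsetP (normal_norm (index2_normal sHGam iHGam))) // defGam mem_gen.
have [Ja [Ia a_t]] : exists Ja Ia, a ^ t = b ^+ Ja * a ^+ Ia.
  by apply: mem_nf; rewrite memJ_norm // mem_gen // inE cycle_id.
have [Jb [Ib b_t]] : exists Jb Ib, b ^ t = b ^+ Jb * a ^+ Ib.
  by apply: mem_nf; rewrite memJ_norm // mem_gen // inE cycle_id orbT.
have [Jb3 Ja0 Ia3] := conj_generators_mod4 invS defGam sHGam iHGam St tH a_t b_t.
apply: (nf_conj_rel_mod16 (Ib := Ib) Ja0 Jb3 Ia3).
by rewrite -a_t -b_t -conjXg -!conjMg [a * b]conjgC conj_ab.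
Qed.

End NormalForm.

Section PermutationModel.
Local Open Scope ring_scope.
Variables (m n : nat).
Hypotheses (m_gt1 : (1 < m)%N) (n_gt1 : (1 < n)%N).
Hypothesis m3_n : (-3 : 'Z_m) ^+ n = 1.

Let pt := ('Z_m * 'Z_n)%type.

Definition shift_a (x : pt) : pt := (x.1 + 1, x.2).
Definition shift_b (x : pt) : pt := (-3 * x.1, x.2 + 1).

Lemma shift_a_inj : injective shift_a.
Proof.
by apply: (can_inj (g := fun x : pt => (x.1 - 1, x.2))) => -[x y]; rewrite /= addrK.
Qed.

Lemma shift_b_inj : injective shift_b.
Proof.
apply: (can_inj (g := fun x : pt => ((-3) ^+ n.-1 * x.1, x.2 - 1))) => -[x y] /=.
by rewrite addrK mulrA -exprSr prednK ?m3_n ?mul1r // ltnW.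
Qed.

Definition alpha : {perm pt} := perm shift_a_inj.
Definition beta : {perm pt} := perm shift_b_inj.

Lemma alphaX k x : (alpha ^+ k)%g x = (x.1 + k%:R, x.2).
Proof.
elim: k => [|k IHk]; first by rewrite expg0 perm1 addr0; case: x.
by rewrite expgSr permM IHk permE /shift_a /= -[k.+1%:R]natr1 addrA.
Qed.

Lemma betaX k x : (beta ^+ k)%g x = ((-3) ^+ k * x.1, x.2 + k%:R).
Proof.
elim: k => [|k IHk]; first by rewrite expg0 perm1 addr0 mul1r; case: x.
by rewrite expgSr permM IHk permE /shift_b /= exprS mulrA -[k.+1%:R]natr1 addrA.
Qed.

Local Open Scope group_scope.

Lemma alpha_order : alpha ^+ m = 1.
Proof. by apply/permP=> x; rewrite alphaX perm1 pchar_Zp // addr0; case: x. Qed.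

Lemma beta_order : beta ^+ n = 1.
Proof. by apply/permP=> x; rewrite betaX perm1 pchar_Zp // addr0 m3_n mul1r; case: x. Qed.

Lemma comm_beta_alpha : [~ beta, alpha] = alpha ^+ 4.
Proof.
have ba : beta * alpha = alpha * beta * alpha ^+ 4.
  by apply/permP=> x; rewrite !permM !permE /shift_a /shift_b /=; congr (_, _); ring.
by rewrite /commg /conjg ba -!mulgA !mulKg.
Qed.

Lemma model_homGrp :
  <[alpha]> <*> <[beta]> \homg Grp (a : b : (a ^+ m = 1, b ^+ n = 1, [~ b, a] = a ^+ 4)).
Proof.
apply/existsP; exists (alpha, beta); rewrite /= !xpair_eqE /=.
by rewrite alpha_order beta_order comm_beta_alpha !eqxx.
Qed.

Lemma model_card : (m * n <= #|<[alpha]> <*> <[beta]>|)%N.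
Proof.
pose x0 : pt := (0, 0)%R.
have onto : [set: pt] \subset [set (g : {perm pt}) x0 | g in <[alpha]> <*> <[beta]>].
  apply/subsetP=> -[x y] _; apply/imsetP; exists (beta ^+ y * alpha ^+ x).
    by rewrite groupM ?groupX // mem_gen // inE cycle_id ?orbT.
  by rewrite permM betaX alphaX /= mulr0 !add0r !natr_Zp.
apply: leq_trans (leq_imset_card _ _); apply: leq_trans (subset_leq_card onto).
by rewrite cardsT card_prod !card_ord !Zp_cast.
Qed.

End PermutationModel.

Lemma expr2n_1add4 (R : comRingType) (u : R) i :
  exists v : R, ((1 + 4 * u) ^+ (2 ^ i) = 1 + (2 ^ (i + 2))%:R * v)%R.
Proof.
elim: i => [|i [v IHi]]; first by exists u; rewrite expn0 expr1.
exists (v + (2 ^ i * 2)%:R * v ^+ 2)%R.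
by rewrite expnS mulnC exprM IHi !expnD (expnS 2 i) !natrM; ring.
Qed.

Lemma m3_exp2n_Zp K L :
  1 < 2 ^ K -> K <= L + 2 -> ((-3 : 'Z_(2 ^ K)) ^+ (2 ^ L) = 1)%R.
Proof.
move=> K_gt KL; rewrite (_ : (-3 : 'Z_(2 ^ K)) = 1 + 4 * -1)%R; last by ring.
have [v ->] := expr2n_1add4 (-1 : 'Z_(2 ^ K))%R L.
by rewrite -(subnKC KL) expnD natrM pchar_Zp // !mul0r addr0.
Qed.

Lemma homGrp_no_star m n (gT : finGroupType) (G : {group gT}) :
  16 %| m -> 0 < m -> 4 %| n -> 0 < n -> m * n <= #|G| ->
  G \homg Grp (a : b : (a ^+ m = 1, b ^+ n = 1, [~ b, a] = a ^+ 4)) ->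
  ~ property_star G.
Proof.
move=> m16 m_gt0 n4 n_gt0 card_ge homG [rT [Gam [H [S [invS defGam sHGam iHGam isoHG]]]]].
have m_gt2 : 2 < m by apply: leq_trans (dvdn_leq m_gt0 m16).
move: homG; rewrite -(eq_homGrp _ isoHG) => /existsP[[a b]].
rewrite /= !xpair_eqE /= => /and4P[/eqP defH /eqP am /eqP bn /eqP ba].
rewrite -defH in sHGam iHGam isoHG.
have card_ab : m * n <= #|<[a]> <*> <[b]>| by rewrite (card_isog isoHG).
exact: (no_involution_generated_overgroup m_gt2 n_gt0 am bn ba card_ab m16 n4
          invS defGam sHGam iHGam).
Qed.

Theorem mainTheorem1 :
  (forall (m n : nat),
     (exists k, m = 2 ^ k)%N -> (exists l, n = 2 ^ l)%N ->
     (16 <= m)%N -> (4 <= n)%N -> (m <= 4 * n)%N ->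
     forall (gT : finGroupType) (G : {group gT}),
       G \isog Grp (a : b : (a ^+ m = 1, b ^+ n = 1, [~ b, a] = a ^+ 4)) ->
       ~ property_star G)
  /\
  (forall N : nat, exists (gT : finGroupType) (G : {group gT}),
       [/\ 2.-group G, (N < #|G|)%N & ~ property_star G]).
Proof.
have dvd_exp2 k K : 2 ^ k <= 2 ^ K -> 2 ^ k %| 2 ^ K.
  by rewrite leq_exp2l // => /dvdn_exp2l.
split=> [m n [K ->] [L ->] m16 n4 mn gT G isoG | N].
  have m_gt1 : 1 < 2 ^ K := leq_trans (isT : 1 < 16) m16.
  have n_gt1 : 1 < 2 ^ L := leq_trans (isT : 1 < 4) n4.
  have K_le : K <= L + 2 by rewrite -(leq_exp2l _ _ (isT : 1 < 2)) expnD mulnC.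
  have m3_n := m3_exp2n_Zp m_gt1 K_le.
  have model_G := model_homGrp m_gt1 n_gt1 m3_n; rewrite -isoG in model_G.
  apply: (homGrp_no_star (dvd_exp2 4 K m16) _ (dvd_exp2 2 L n4)) (isoGrp_hom isoG).
  - by rewrite expn_gt0.
  - by rewrite expn_gt0.
  exact: leq_trans (model_card _ _ m3_n) (leq_homg model_G).
pose K := N + 4.
have m16 : 2 ^ 4 <= 2 ^ K by rewrite leq_exp2l ?leq_addl.
have m_gt1 : 1 < 2 ^ K := leq_trans (isT : 1 < 16) m16.
have m3_m := m3_exp2n_Zp m_gt1 (leq_addr 2 K).
have card_ge := model_card m_gt1 m_gt1 m3_m.
exists _, (<[alpha (2 ^ K) (2 ^ K)]> <*> <[beta m_gt1 m3_m]>)%G; split.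
- have m_gt2 : 2 < 2 ^ K := leq_trans (isT : 2 < 16) m16.
  apply: pnat_dvd (card_join_cycles_dvdn m_gt2 (alpha_order _ m_gt1)
                     (beta_order m_gt1 m3_m) (comm_beta_alpha _ m3_m)) _.
  by rewrite pnatM pnatX.
- apply: leq_trans card_ge; apply: leq_trans (ltn_expl N (isT : 1 < 2)) _.
  by rewrite -expnD leq_exp2l // /K; lia.
have K_gt0 : 0 < 2 ^ K by rewrite expn_gt0.
have n4 : 2 ^ 2 <= 2 ^ K := leq_trans (isT : 2 ^ 2 <= 2 ^ 4) m16.
exact: (homGrp_no_star (dvd_exp2 4 K m16) K_gt0 (dvd_exp2 2 K n4) K_gt0 card_ge
                       (model_homGrp m_gt1 m_gt1 m3_m)).
Qed.
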